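(* For integers $k\ge1$, $l\ge0$, $m\ge1$ define \[ \Psi^k_{l,m}(z)=\sum_{0\le p_1<p_2<\dots<p_k}z^{\,l+m(2^{p_1}+2^{p_2}+\dots+2^{p_k})}\in A(D), \] and $\Psi^0_{l,m}(z)=z^l$. Then \[ \mathcal{T}\Psi^k_{l,m}= \begin{cases} \Psi^k_{\frac l2,\frac m2}, & l,m \text{ even},\\[2pt] \Psi^k_{\frac{3l+1}2,\frac{3m}2}, & l \text{ odd},\ m\text{ even},\\[2pt] \Psi^k_{\frac l2,m}+\Psi^{k-1}_{\frac{3(l+m)+1}2,3m}, & l\text{ even},\ m \text{ odd},\\[2pt] \Psi^k_{\frac{3l+1}2,3m}+\Psi^{k-1}_{\frac{l+m}2,m}, & l,m\text{ odd}. \end{cases} \]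
   Context: $T$ is the Collatz map $T(n)=\frac{3n+1}2$ ($n$ odd), $T(n)=\frac n2$ ($n$ even). $D$ is the open unit disk and $A(D)$ the holomorphic functions on $D$. The operator $\mathcal{T}$ acts on $A(D)$ by $\mathcal{T}\big(\sum_{n\ge0}a_nz^n\big)=\sum_{n\ge0}a_nz^{T(n)}$, i.e. $\mathcal{T}z^n=z^{T(n)}$. Thus $\Psi^k_{l,m}$ is the generating function of $\{l+mN: N$ a nonnegative integer with exactly $k$ ones in its binary expansion$\}$. *)

(* Holomorphic functions on D are represented by their
   Taylor coefficient sequences (nat -> nat suffices: all series involved
   have nonnegative integer coefficients). *)
From mathcomp Require Import all_boot.
Set Implicit Arguments. Unset Strict Implicit. Unset Printing Implicit Defensive.

Definition collatz (n : nat) : nat := if odd n then (3 * n + 1)./2 else n./2.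

(* The operator T on power series: T z^n = z^(T n), extended linearly.
   Coefficient of z^j in T f is the sum of the coefficients a_n of f over
   the (at most two) n with T n = j; any such n satisfies n <= 2 j. *)
Definition Top (a : nat -> nat) (j : nat) : nat :=
  \sum_(n < (2 * j).+1 | collatz n == j) a n.

(* Coefficient of z^j in Psi^k_{l,m} = sum over 0 <= p_1 < ... < p_k of
   z^(l + m (2^p_1 + ... + 2^p_k)): the number of k-element sets S of
   exponents with l + m * sum_{p in S} 2^p = j.  (For m >= 1 every such p
   satisfies p < 2^p <= j, so S ranges over subsets of 'I_j.)  For k = 0
   this gives z^l. *)
Definition Psi (k l m : nat) (j : nat) : nat :=
  #|[set S : {set 'I_j} | (#|S| == k) && (l + m * \sum_(p in S) 2 ^ p == j)]|.

(* For m >= 1 the exponent l + m N determines N, so Psi^k_{l,m} is the 0/1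
   indicator of {l + m N | popcount N = k}.  Sorting N by parity, and using
   popcount (2N) = popcount N and popcount (2N+1) = popcount N + 1, gives
   Psi^k_{l,m} = Psi^k_{l,2m} + Psi^{k-1}_{l+m,2m}.  All exponents of a
   progression l + 2m N have the parity of l, so T maps it affinely onto
   l/2 + m N or (3l+1)/2 + 3m N, and T Psi^k_{l,2m} is again a Psi. *)
From mathcomp Require Import all_boot zify.
Set Implicit Arguments. Unset Strict Implicit. Unset Printing Implicit Defensive.

Definition digit (N p : nat) : bool := odd (N %/ 2 ^ p).

(* Digits at positions [p >= N] vanish, since [N < 2 ^ N]. *)
Definition popcount (N : nat) : nat := \sum_(p < N) digit N p.

Lemma digitS N p : digit N p.+1 = digit N./2 p.
Proof. by rewrite /digit expnS divnMA divn2. Qed.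

Lemma digit_small N p : N < 2 ^ p -> digit N p = false.
Proof. by move=> lt_N; rewrite /digit divn_small. Qed.

Lemma sum_digits_widen N b c : N < 2 ^ b -> b <= c ->
  \sum_(p < c) digit N p = \sum_(p < b) digit N p.
Proof.
move=> lt_N le_bc.
rewrite (big_ord_widen c (fun p => nat_of_bool (digit N p)) le_bc) [RHS]big_mkcond /=.
apply: eq_bigr => p _; case: ltnP => // le_bp.
by rewrite digit_small // (leq_trans lt_N) // leq_pexp2l.
Qed.

Lemma popcount_digits N b : N < 2 ^ b -> popcount N = \sum_(p < b) digit N p.
Proof.
move=> lt_N; have lt_NN := ltn_expl N (ltnSn 1).
rewrite /popcount -(sum_digits_widen lt_NN (leq_maxl N b)).
exact: sum_digits_widen lt_N (leq_maxr N b).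
Qed.

Lemma popcountE N : popcount N = odd N + popcount N./2.
Proof.
have lt_N : N < 2 ^ N.+1 by rewrite (ltn_trans (ltn_expl N (ltnSn 1))) // ltn_exp2l.
have lt_half : N./2 < 2 ^ N by rewrite (leq_ltn_trans _ (ltn_expl N (ltnSn 1))) // -divn2 leq_div.
rewrite (popcount_digits lt_N) big_ord_recl (popcount_digits lt_half).
by congr (_ + _); [rewrite /digit expn0 divn1 | apply: eq_bigr => p _; rewrite digitS].
Qed.

Lemma popcount_double N : popcount N.*2 = popcount N.
Proof. by rewrite popcountE odd_double doubleK. Qed.

Lemma popcount_doubleS N : popcount N.*2.+1 = (popcount N).+1.
Proof. by rewrite popcountE /= odd_double uphalf_double. Qed.

Lemma sum_digits_exp N b : N < 2 ^ b -> \sum_(p < b) digit N p * 2 ^ p = N.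
Proof.
elim: b N => [|b IHb] N lt_N; first by rewrite big_ord0; move: lt_N; rewrite expn0; lia.
rewrite big_ord_recl /digit expn0 divn1 muln1.
under eq_bigr => p _ do rewrite -/(digit N p.+1) digitS expnS mulnCA.
rewrite -big_distrr /= IHb; first by lia.
by move: lt_N; rewrite expnS; lia.
Qed.

Lemma digit_sum_exp b (F : 'I_b -> bool) (i : 'I_b) :
  digit (\sum_(p < b) F p * 2 ^ p) i = F i.
Proof.
elim: b F i => [|b IHb] F i; first by case: i.
rewrite big_ord_recl expn0 muln1.
under eq_bigr => p _ do rewrite expnS mulnCA.
rewrite -big_distrr; case: (unliftP ord0 i) => [i' ->|->] /=.
- by rewrite digitS mul2n half_bit_double IHb.
- by rewrite /digit /= expn0 divn1 oddD oddM addbF; case: (F ord0).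
Qed.

Definition digitset b N : {set 'I_b} := [set p : 'I_b | digit N p].

Lemma sum_exp_set b (S : {set 'I_b}) :
  \sum_(p in S) 2 ^ p = \sum_(p < b) (p \in S) * 2 ^ p.
Proof. by rewrite big_mkcond; apply: eq_bigr => p _; case: (p \in S); rewrite ?mul1n. Qed.

Lemma digitset_sum b (S : {set 'I_b}) : digitset b (\sum_(p in S) 2 ^ p) = S.
Proof. by apply/setP => i; rewrite inE sum_exp_set digit_sum_exp. Qed.

Lemma sum_digitset b N : N < 2 ^ b -> \sum_(p in digitset b N) 2 ^ p = N.
Proof.
move=> lt_N; rewrite sum_exp_set -[RHS](sum_digits_exp lt_N).
by apply: eq_bigr => p _; rewrite inE.
Qed.

Lemma card_digitset b N : N < 2 ^ b -> #|digitset b N| = popcount N.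
Proof.
move=> lt_N; rewrite (popcount_digits lt_N) -sum1_card big_mkcond /=.
by apply: eq_bigr => p _; rewrite inE; case: digit.
Qed.

Definition Psi_supp k l m j : bool :=
  [exists N : 'I_j.+1, (popcount N == k) && (l + m * N == j)].

Lemma Psi_suppP {k l m j} : 0 < m ->
  reflect (exists N, popcount N = k /\ l + m * N = j) (Psi_supp k l m j).
Proof.
move=> m_gt0; apply: (iffP existsP) => [[N /andP[/eqP hk /eqP hj]] | [N [hk hj]]].
  by exists N.
have lt_N : N < j.+1 by rewrite ltnS -hj (leq_trans (leq_pmull N m_gt0)) ?leq_addl.
by exists (Ordinal lt_N); rewrite /= hk hj !eqxx.
Qed.

Lemma solution_lt_exp l m N j : 0 < m -> l + m * N = j -> N < 2 ^ j.
Proof.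
move=> m_gt0 <-; rewrite (leq_ltn_trans _ (ltn_expl _ (ltnSn 1))) //.
by rewrite (leq_trans (leq_pmull N m_gt0)) ?leq_addl.
Qed.

Lemma PsiE k l m j : 0 < m -> Psi k l m j = Psi_supp k l m j.
Proof.
move=> m_gt0; rewrite /Psi; case: Psi_suppP => // [[N [hk hj]] | miss].
- have lt_N := solution_lt_exp m_gt0 hj.
  apply/eqP/cards1P; exists (digitset j N); apply/setP => S; rewrite !inE.
  apply/andP/eqP => [[_ /eqP hS] | ->]; last by rewrite card_digitset ?sum_digitset ?hk ?hj.
  have sumS : \sum_(p in S) 2 ^ p = N by apply/eqP; rewrite -(eqn_pmul2l m_gt0); lia.
  by rewrite -sumS digitset_sum.
- apply/eqP; rewrite cards_eq0; apply/eqP/setP => S; rewrite !inE.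
  apply/negP => /andP[/eqP hk /eqP hj]; apply: miss; exists (\sum_(p in S) 2 ^ p).
  by rewrite -(card_digitset (solution_lt_exp m_gt0 hj)) digitset_sum.
Qed.

Lemma eq_Psi k l m j l' m' j' : 0 < m -> 0 < m' ->
  (forall N, l + m * N = j <-> l' + m' * N = j') -> Psi k l m j = Psi k l' m' j'.
Proof.
move=> m_gt0 m'_gt0 same; rewrite !PsiE //; congr nat_of_bool.
by apply/(Psi_suppP m_gt0)/(Psi_suppP m'_gt0) => -[N [hk /same hj]]; exists N.
Qed.

Lemma Psi_eq0 k l m j : 0 < m -> (forall N, l + m * N <> j) -> Psi k l m j = 0.
Proof. by move=> m_gt0 miss; rewrite PsiE //; case: Psi_suppP => // -[N [_ /miss]]. Qed.

Lemma Psi_split k l m j : 0 < k -> 0 < m ->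
  Psi k l m j = Psi k l m.*2 j + Psi k.-1 (l + m) m.*2 j.
Proof.
move=> k_gt0 m_gt0; have m2_gt0 : 0 < m.*2 by rewrite double_gt0.
rewrite !PsiE //.
have -> : Psi_supp k l m j = Psi_supp k l m.*2 j || Psi_supp k.-1 (l + m) m.*2 j.
  apply/(Psi_suppP m_gt0)/orP => [[N [hk hj]] | [] /(Psi_suppP m2_gt0) [N [hk hj]]].
  - rewrite -(odd_double_half N) in hk hj; case: (odd N) hk hj => /= hk hj.
    + by right; apply/(Psi_suppP m2_gt0); exists N./2; rewrite popcount_doubleS in hk; lia.
    + by left; apply/(Psi_suppP m2_gt0); exists N./2; rewrite popcount_double in hk; lia.
  - by exists N.*2; rewrite popcount_double; lia.
  - by exists N.*2.+1; rewrite popcount_doubleS; lia.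
have disjoint : ~~ (Psi_supp k l m.*2 j && Psi_supp k.-1 (l + m) m.*2 j).
  apply/andP => -[/(Psi_suppP m2_gt0) [N1 [_ h1]] /(Psi_suppP m2_gt0) [N2 [_ h2]]].
  have /eqP : m * N1.*2 = m * N2.*2.+1 by lia.
  by rewrite eqn_pmul2l //; lia.
by move: disjoint; case: Psi_supp; case: Psi_supp.
Qed.

Lemma collatz_eq n j :
  (collatz n == j) = (n == j.*2) || (j %% 3 == 2) && (n == (j %/ 3).*2.+1).
Proof. by rewrite /collatz; case: ifP => n_odd; lia. Qed.

Lemma TopE a j : Top a j = a j.*2 + (j %% 3 == 2) * a (j %/ 3).*2.+1.
Proof.
have lt_2j : j.*2 < (2 * j).+1 by rewrite mul2n.
rewrite /Top (bigD1 (Ordinal lt_2j)) ?collatz_eq ?eqxx //=; congr (_ + _).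
case: eqP => [j3 | j3]; last by rewrite big_pred0 // => n; rewrite collatz_eq -val_eqE /=; lia.
have lt_n : (j %/ 3).*2.+1 < (2 * j).+1 by lia.
by rewrite (big_pred1 (Ordinal lt_n)) ?mul1n // => n; rewrite /= collatz_eq -!val_eqE /=; lia.
Qed.

Lemma eq_Top a b j : a =1 b -> Top a j = Top b j.
Proof. by move=> eq_ab; apply: eq_bigr. Qed.

Lemma Top_add a b j : Top (fun n => a n + b n) j = Top a j + Top b j.
Proof. exact: big_split. Qed.

Lemma Top_Psi_even k l m j : 0 < m -> ~~ odd l ->
  Top (Psi k l m.*2) j = Psi k l./2 m j.
Proof.
move=> m_gt0 l_even; have m2_gt0 : 0 < m.*2 by rewrite double_gt0.
have odd_miss : Psi k l m.*2 (j %/ 3).*2.+1 = 0 by apply: Psi_eq0 => // N; lia.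
by rewrite TopE odd_miss muln0 addn0; apply: eq_Psi => // N; lia.
Qed.

Lemma Top_Psi_odd k l m j : 0 < m -> odd l ->
  Top (Psi k l m.*2) j = Psi k (3 * l + 1)./2 (3 * m) j.
Proof.
move=> m_gt0 l_odd; have m2_gt0 : 0 < m.*2 by rewrite double_gt0.
have m3_gt0 : 0 < 3 * m by rewrite muln_gt0 m_gt0.
have even_miss : Psi k l m.*2 j.*2 = 0 by apply: Psi_eq0 => // N; lia.
rewrite TopE even_miss add0n; case: eqP => j3; last by rewrite mul0n Psi_eq0 // => N; lia.
by rewrite mul1n; apply: eq_Psi => // N; lia.
Qed.

Theorem mainTheorem14 (k l m : nat) : 1 <= k -> 1 <= m ->
  [/\ (~~ odd l -> ~~ odd m -> forall j,
         Top (Psi k l m) j = Psi k l./2 m./2 j),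
      (odd l -> ~~ odd m -> forall j,
         Top (Psi k l m) j = Psi k (3 * l + 1)./2 (3 * m)./2 j),
      (~~ odd l -> odd m -> forall j,
         Top (Psi k l m) j = Psi k l./2 m j + Psi k.-1 (3 * (l + m) + 1)./2 (3 * m) j)
    & (odd l -> odd m -> forall j,
         Top (Psi k l m) j = Psi k (3 * l + 1)./2 (3 * m) j + Psi k.-1 (l + m)./2 m j)].
Proof.
move=> k_gt0 m_gt0.
have Top_split j : Top (Psi k l m) j = Top (Psi k l m.*2) j + Top (Psi k.-1 (l + m) m.*2) j.
  by rewrite -Top_add; apply: eq_Top => n; apply: Psi_split.
split=> [l_even m_even | l_odd m_even | l_even m_odd | l_odd m_odd] j.
- by rewrite -{1}(even_halfK m_even) Top_Psi_even //; lia.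
- have -> : (3 * m)./2 = 3 * m./2 by lia.
  by rewrite -{1}(even_halfK m_even) Top_Psi_odd //; lia.
- by rewrite Top_split Top_Psi_even // Top_Psi_odd // oddD (negbTE l_even) m_odd.
- by rewrite Top_split Top_Psi_odd // Top_Psi_even // oddD l_odd m_odd.
Qed.
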